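(* Let $p\ge 2$ be an integer. Let $G$ be the graph obtained as follows: take a clique on vertices $u_1,\dots,u_p$; add vertices $s,t$ and, for each $i\in\{1,\dots,p\}$, new vertices $x_i,y_i$ with edges $sx_i$, $x_iu_i$, $ty_i$, $y_iu_i$. Then $\lambda_G(s,t)=p$ and $d_G(s,t)=2$. In particular, $\lambda_G(s,t)-d_G(s,t)$ can be arbitrarily large.
   Context: Rendezvous game with adversaries. Let $G$ be a finite, simple, undirected, connected graph, let $s,t\in V(G)$ and let $k\ge 1$ be an integer. Two players play: Facilitator, who controls two agents $R$ and $J$ initially placed on $s$ and $t$ respectively, and Divider, who controls $k$ agents $D_1,\dots,D_k$ which Divider initially places on vertices of $V(G)\setminus\{s,t\}$ of his choice (several agents may share a vertex). After the initial placement the players alternate moves, Facilitator moving first. In a move, the player moves each of his agents to an adjacent vertex or leaves it where it is; no agent may be moved to a vertex currently occupied by an agent of the opponent. Both players have full information. Facilitator wins if at some moment $R$ and $J$ occupy the same vertex; Divider wins if this never happens. $d_G(s,t)$ is the minimum $k$ such that Divider with $k$ agents has a winning strategy on $G$ against Facilitator starting from $s$ and $t$; $d_G(s,t)=+\infty$ if $s=t$ or $s,t$ are adjacent. $\lambda_G(s,t)$ is the minimum size of a set $S\subseteq V(G)\setminus\{s,t\}$ such that $s$ and $t$ lie in different connected components of $G-S$; $\lambda_G(s,t)=+\infty$ if $s=t$ or $s,t$ are adjacent. *)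

From mathcomp Require Import all_boot.
From mathcomp Require Import boolp.

Set Implicit Arguments.
Unset Strict Implicit.
Unset Printing Implicit Defensive.

(** closed neighbourhood: [y] is [x] or adjacent to [x] (a single move). *)
Definition cnbr (V : finType) (e : rel V) (x y : V) : bool := (y == x) || e x y.

(** * Connectivity [lambda_G(s,t)]  ([None] encodes [+oo]). *)

Definition separates (V : finType) (e : rel V) (s t : V) (S : {set V}) : bool :=
  [&& s \notin S, t \notin S &
      ~~ connect [rel x y | [&& e x y, x \notin S & y \notin S]] s t].

Definition lambdaG (V : finType) (e : rel V) (s t : V) : option nat :=
  if (s == t) || e s t then None
  else Some (\big[minn/#|V|]_(S : {set V} | separates e s t S) #|S|).

(** A play is described by the positions [r n], [j n] of R and J at time [n]
   (time [n+1] = after Facilitator's [n]-th move) and by the positions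
   [dpos n] of the Divider agents when Facilitator makes his [n]-th move. *)

Definition hist (V : finType) (r j : nat -> V) (n : nat) : seq (V * V) :=
  mkseq (fun i => (r i, j i)) n.+1.

Definition dpos (V : finType) (k : nat) (d0 : {ffun 'I_k -> V})
  (sigma : seq (V * V) -> {ffun 'I_k -> V}) (r j : nat -> V) (n : nat)
  : {ffun 'I_k -> V} :=
  if n is n'.+1 then sigma (hist r j n) else d0.

Definition F_legal (V : finType) (e : rel V) (k : nat) (d : {ffun 'I_k -> V})
  (x x' : V) : bool :=
  cnbr e x x' && [forall i, d i != x'].

Definition D_legal (V : finType) (e : rel V) (k : nat) (d d' : {ffun 'I_k -> V})
  (x y : V) : bool :=
  [forall i, [&& cnbr e (d i) (d' i), d' i != x & d' i != y]].

Definition divider_strategy_wins (V : finType) (e : rel V) (s t : V) (k : nat)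
  (d0 : {ffun 'I_k -> V}) (sigma : seq (V * V) -> {ffun 'I_k -> V}) : Prop :=
  forall r j : nat -> V, r 0 = s -> j 0 = t ->
  forall n : nat,
    (forall m, m < n ->
       F_legal e (dpos d0 sigma r j m) (r m) (r m.+1) /\
       F_legal e (dpos d0 sigma r j m) (j m) (j m.+1)) ->
    r n <> j n /\
    (forall m, m < n ->
       D_legal e (dpos d0 sigma r j m) (dpos d0 sigma r j m.+1) (r m.+1) (j m.+1)).

Definition divider_wins (V : finType) (e : rel V) (s t : V) (k : nat) : Prop :=
  exists d0 : {ffun 'I_k -> V},
    (forall i, d0 i != s /\ d0 i != t) /\
    exists sigma, divider_strategy_wins e s t d0 sigma.

Lemma dG_ex_aux (V : finType) (e : rel V) (s t : V) :
  (exists k, 0 < k /\ divider_wins e s t k) ->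
  exists k, `[< 0 < k /\ divider_wins e s t k >].
Proof. by move=> [k Hk]; exists k; apply/asboolP. Qed.

(** [d_G(s,t)]: least [k >= 1] for which Divider wins ([None] = [+oo]). *)
Definition dG (V : finType) (e : rel V) (s t : V) : option nat :=
  if (s == t) || e s t then None
  else match pselect (exists k, 0 < k /\ divider_wins e s t k) with
       | left H => Some (ex_minn (dG_ex_aux H))
       | right _ => None
       end.

(** * The graph of the theorem.
   Vertices: [inl (0,i)] = u_i, [inl (1,i)] = x_i, [inl (2,i)] = y_i,
   [inr true] = s, [inr false] = t. *)
Definition gV (p : nat) : finType := (('I_3 * 'I_p) + bool)%type.

Definition gedge (p : nat) (a b : gV p) : bool :=
  match a, b with
  | inl (k, i), inl (l, j) =>
      [&& k == 0 :> nat, l == 0 :> nat & i != j]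
      || ((i == j) && (((k == 0 :> nat) && (l != 0 :> nat))
                       || ((k != 0 :> nat) && (l == 0 :> nat))))
  | inl (k, _), inr c => k == (if c then 1 else 2) :> nat
  | inr c, inl (k, _) => k == (if c then 1 else 2) :> nat
  | inr _, inr _ => false
  end.

Definition gs (p : nat) : gV p := inr true.
Definition gt (p : nat) : gV p := inr false.

From mathcomp Require Import all_boot order boolp.

Set Implicit Arguments.
Unset Strict Implicit.
Unset Printing Implicit Defensive.

(** The clique [U] separates [s] from [t], since every edge
   leaving the "s-side" [{s, x_i}] ends in [U]; conversely a separator must
   meet each of the [p] disjoint paths [s x_i u_i y_i t], so [lambda = p].

   Two Divider agents win by "shadowing": the first one always stands
   on [u_i] when R stands on [x_i] (and the second one likewise for J and
   [y_i]), which keeps R on the s-side and J on the t-side forever.  Against a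
   single Divider agent, Facilitator wins: we describe winning positions by
   an inductive predicate [fwin] (Facilitator can force a meeting whatever
   Divider does), show that no Divider strategy survives a [fwin] position,
   and exhibit a short game tree from the start.  Its leaves all use the
   "two routes" lemma: one agent waits at [w] while the other reaches [w]
   either in two steps through [c] or in three steps along a route that the
   Divider agent, guarding [c], cannot cut in time. *)

Section Characterisations.
Variables (V : finType) (e : rel V) (s t : V).
Hypothesis st_far : ~~ ((s == t) || e s t).

Lemma lambdaG_eq (S0 : {set V}) :
  separates e s t S0 ->
  (forall S, separates e s t S -> #|S0| <= #|S|) ->
  lambdaG e s t = Some #|S0|.
Proof.
move=> sepS0 minS0; rewrite /lambdaG (negbTE st_far); congr Some.
apply/eqP; rewrite eqn_leq; apply/andP; split.
  (* [minn] is the order-theoretic [min] of [nat]. *)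
  exact: (@Order.TotalTheory.bigmin_inf _ nat _ _ S0 _ #|S0| _ sepS0 (leqnn _)).
apply: (big_ind (fun m => #|S0| <= m)) => [|m n hm hn|S /minS0 //].
  exact: max_card.
by rewrite leq_min hm hn.
Qed.

Lemma dG_eq (k : nat) :
  0 < k -> divider_wins e s t k ->
  (forall m, 0 < m < k -> ~ divider_wins e s t m) -> dG e s t = Some k.
Proof.
move=> k_gt0 wins_k loses_below; rewrite /dG (negbTE st_far).
case: pselect => [some_k_wins|[]]; last by exists k.
congr Some; case: ex_minnP => m /asboolP [m_gt0 wins_m] minm.
apply/eqP; rewrite eqn_leq minm ?andbT; last exact/asboolP.
rewrite leqNgt; apply/negP => mk.
by apply: (loses_below m) wins_m; rewrite m_gt0.
Qed.

End Characterisations.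

Lemma connect_invariant (T : finType) (e : rel T) (P : pred T) x y :
  (forall a b, P a -> e a b -> P b) -> P x -> connect e x y -> P y.
Proof.
move=> stable Px /connectP [q]; elim: q x Px => [|z q IH] x Px /=.
  by move=> _ ->.
by move=> /andP [exz path_zq] last_y; exact: IH (stable _ _ Px exz) path_zq last_y.
Qed.

Section Game.
Variables (V : finType) (e : rel V) (k : nat).

(** [fwin r j d]: with R on [r], J on [j], the Divider agents on [d] and
   Facilitator to move, Facilitator can force R and J to meet. *)
Inductive fwin : V -> V -> {ffun 'I_k -> V} -> Prop :=
| fwin_met r d : fwin r r d
| fwin_move r j d r' j' :
    F_legal e d r r' -> F_legal e d j j' ->
    (forall d', D_legal e d d' r' j' -> fwin r' j' d') -> fwin r j d.

Lemma D_legal_sym (d d' : {ffun 'I_k -> V}) (x y : V) : D_legal e d d' x y = D_legal e d d' y x.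
Proof. by apply: eq_forallb => i; rewrite (andbC (_ != x)). Qed.

Lemma fwin_sym r j d : fwin r j d -> fwin j r d.
Proof.
elim=> [r0 d0|r0 j0 d0 r' j' Fr Fj _ IH]; first exact: fwin_met.
by apply: (fwin_move Fj Fr) => d' D; apply: IH; rewrite D_legal_sym.
Qed.

Lemma dpos_prefix (d0 : {ffun 'I_k -> V}) (sigma : seq (V * V) -> {ffun 'I_k -> V}) (r j r' j' : nat -> V) n :
  (forall i, i <= n -> r' i = r i /\ j' i = j i) ->
  dpos d0 sigma r' j' n = dpos d0 sigma r j n.
Proof.
case: n => //= n agree; congr sigma; apply/eq_in_map => i.
by rewrite mem_iota add0n ltnS => /andP [_ /agree [-> ->]].
Qed.

(** No Divider strategy wins from a position won by Facilitator: follow the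
   play, extending it at each step by the move [fwin] prescribes. *)
Lemma fwin_defeats (s t : V) (d0 : {ffun 'I_k -> V})
    (sigma : seq (V * V) -> {ffun 'I_k -> V}) :
  divider_strategy_wins e s t d0 sigma -> ~ fwin s t d0.
Proof.
move=> Hw W.
suff play_fails : forall x y d, fwin x y d -> forall n r j, r 0 = s -> j 0 = t ->
    (forall m, m < n ->
       F_legal e (dpos d0 sigma r j m) (r m) (r m.+1) /\
       F_legal e (dpos d0 sigma r j m) (j m) (j m.+1)) ->
    r n = x -> j n = y -> dpos d0 sigma r j n = d -> False.
  exact: (play_fails _ _ _ W 0 (fun=> s) (fun=> t)).
move=> x y d; elim=> {x y d} [x d|x y d x' y' Fx Fy _ IH] n r j r0 j0 legal rx jy dd.
  by case: (Hw r j r0 j0 n legal); rewrite rx jy.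
pose r' m := if m <= n then r m else x'.
pose j' m := if m <= n then j m else y'.
have dpos' m : m <= n -> dpos d0 sigma r' j' m = dpos d0 sigma r j m.
  by move=> mn; apply: dpos_prefix => i im; rewrite /r' /j' (leq_trans im mn).
have legal' m : m < n.+1 ->
    F_legal e (dpos d0 sigma r' j' m) (r' m) (r' m.+1) /\
    F_legal e (dpos d0 sigma r' j' m) (j' m) (j' m.+1).
  rewrite ltnS leq_eqVlt => /predU1P [->|mn].
    by rewrite dpos' // /r' /j' leqnn ltnn rx jy dd; exact: (conj Fx Fy).
  by rewrite dpos' ?(ltnW mn) // /r' /j' (ltnW mn) mn; exact: legal.
have [_ Dlegal] := Hw r' j' r0 j0 n.+1 legal'.
apply: (IH (dpos d0 sigma r' j' n.+1) _ n.+1 r' j') => //; rewrite /r' /j' ?ltnn //.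
by move: (Dlegal n (ltnSn n)); rewrite dpos' // /r' /j' ltnn dd.
Qed.

End Game.

Section OneAgent.
Variables (V : finType) (e : rel V).
Implicit Types (d : {ffun 'I_1 -> V}) (x y w z c : V).

Lemma cnbr_refl x : cnbr e x x.
Proof. by rewrite /cnbr eqxx. Qed.

Lemma F_legal1 d x x' : F_legal e d x x' = cnbr e x x' && (d ord0 != x').
Proof.
rewrite /F_legal; congr andb.
by apply/forallP/idP => [/(_ ord0) //|dx i]; rewrite (ord1 i).
Qed.

Lemma D_legal1 d d' x y :
  D_legal e d d' x y -> [/\ cnbr e (d ord0) (d' ord0), d' ord0 != x & d' ord0 != y].
Proof. by move/forallP/(_ ord0)/and3P. Qed.

Lemma fwin_meet_at r j c d :
  cnbr e r c -> cnbr e j c -> d ord0 != c -> fwin e r j d.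
Proof.
move=> rc jc dc; apply: (@fwin_move _ _ _ _ _ _ c c); rewrite ?F_legal1 ?rc ?jc //.
by move=> d' _; apply: fwin_met.
Qed.

(** R waits at [w] while J, on [z], goes either to [c] (if unguarded, R joins
   it there) or around along [z, z1, z2, w]: a Divider agent guarding [c]
   cannot reach [z2] in time since [z2] is not a neighbour of [c]. *)
Lemma fwin_two_routes w z c z1 z2 d :
  cnbr e w c -> cnbr e z c -> cnbr e z z1 -> cnbr e z1 z2 -> cnbr e z2 w ->
  c != z1 -> ~~ cnbr e c z2 -> d ord0 != w -> fwin e w z d.
Proof.
move=> wc zc zz1 z1z2 z2w cz1 cz2 dw.
have [dc|dc] := eqVneq (d ord0) c; last exact: fwin_meet_at wc zc dc.
apply: (@fwin_move _ _ _ _ _ _ w z1); rewrite ?F_legal1 ?cnbr_refl ?dw ?zz1 ?dc //.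
move=> d1 /D_legal1 [cd1 d1w _].
apply: (@fwin_move _ _ _ _ _ _ w z2); rewrite ?F_legal1 ?cnbr_refl ?d1w ?z1z2 //.
  by apply: contraNneq cz2 => <-; rewrite -dc.
by move=> d2 /D_legal1 [_ d2w _]; exact: fwin_meet_at (cnbr_refl w) z2w d2w.
Qed.

End OneAgent.

Section TheGraph.
Variable p : nat.
Implicit Types (i a b : 'I_p) (v w : gV p).

Definition vu i : gV p := inl (ord0, i).
Definition vx i : gV p := inl (@Ordinal 3 1 isT, i).
Definition vy i : gV p := inl (@Ordinal 3 2 isT, i).

Definition side (c : bool) v : bool :=
  match v with inl (k, _) => k == (if c then 1 else 2) :> nat | inr b => b == c end.

Definition isU v : bool := if v is inl (k, _) then k == 0 :> nat else false.
Definition idx v : option 'I_p := if v is inl (_, i) then Some i else None.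

Definition U : {set gV p} := [set vu i | i : 'I_p].

Lemma mem_U v : (v \in U) = isU v.
Proof.
apply/imsetP/idP => [[i _ ->] //|]; case: v => [[k i]|//] /= /eqP k0.
by exists i => //; congr (inl (_, _)); apply: val_inj.
Qed.

Lemma card_U : #|U| = p.
Proof. by rewrite card_imset ?card_ord // => i j []. Qed.

Lemma side_notU c v : side c v -> isU v = false.
Proof. by case: c; case: v => [[k i]|b] //= /eqP ->. Qed.

Lemma sides_disjoint v : side true v -> side false v -> False.
Proof. by case: v => [[k i]|b] /= /eqP -> //= /eqP. Qed.

Lemma side_edge c v w :
  side c v -> gedge v w -> side c w || isU w && (idx w == idx v).
Proof.
case: c; case: v => [[[[|[|[|k]]] hk] i]|[]]; case: w => [[[[|[|[|l]]] hl] j]|[]] //=;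
  rewrite ?andbF ?orbF ?andbT //=.
all: first [by [] | by move=> _ /eqP ->].
Qed.

Lemma separates_U : separates (@gedge p) (gs p) (gt p) U.
Proof.
rewrite /separates !mem_U /=; apply/negP => conn.
suff : side true (gt p) by [].
apply: (connect_invariant _ _ conn) => // a b sa /and3P [ab _]; rewrite mem_U => bU.
by have /orP [//|/andP [bU' _]] := side_edge sa ab; rewrite bU' in bU.
Qed.

(** A separator meets each path [s x_i u_i y_i t], so it has [p] distinct indices. *)
Lemma separator_size S : separates (@gedge p) (gs p) (gt p) S -> p <= #|S|.
Proof.
case/and3P => sS tS not_conn.
have hit i : Some i \in idx @: S.
  have [xS|xS] := boolP (vx i \in S); first by apply/imsetP; exists (vx i).
  have [uS|uS] := boolP (vu i \in S); first by apply/imsetP; exists (vu i).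
  have [yS|yS] := boolP (vy i \in S); first by apply/imsetP; exists (vy i).
  case/negP: not_conn; apply/connectP.
  by exists [:: vx i; vu i; vy i; gt p] => //=; rewrite sS xS uS yS tS !eqxx.
have card_Some : #|[set Some i | i : 'I_p]| = p.
  by rewrite card_imset ?card_ord //; exact: Some_inj.
rewrite -{1}card_Some (leq_trans _ (leq_imset_card idx S)) //.
by apply: subset_leq_card; apply/subsetP => o /imsetP [i _ ->].
Qed.

Lemma lambda_Gp : lambdaG (@gedge p) (gs p) (gt p) = Some p.
Proof.
rewrite (@lambdaG_eq _ _ _ _ _ U) ?card_U //; first exact: separates_U.
by move=> S /separator_size.
Qed.

(** ** Two Divider agents win by shadowing *)

Section Shadowing.
Variable i0 : 'I_p.

Definition shadow v : gV p := vu (odflt i0 (idx v)).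

Definition follow (a : 'I_2) (x y : gV p) : gV p := if a == ord0 then x else y.

Definition shadow_start : {ffun 'I_2 -> gV p} :=
  [ffun a => shadow (follow a (gs p) (gt p))].
Definition shadow_strategy (h : seq (gV p * gV p)) : {ffun 'I_2 -> gV p} :=
  [ffun a => let rj := last (gs p, gt p) h in shadow (follow a rj.1 rj.2)].

Lemma dpos_shadow r j m (a : 'I_2) : r 0 = gs p -> j 0 = gt p ->
  dpos shadow_start shadow_strategy r j m a = shadow (follow a (r m) (j m)).
Proof.
by case: m => [|m] r0 j0 /=; rewrite ffunE ?r0 ?j0 // /hist mkseqS last_rcons.
Qed.

Lemma shadow_U v : isU v -> shadow v = v.
Proof.
by case: v => [[k i]|//] /= /eqP k0; congr (inl (_, _)); apply: val_inj.
Qed.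

Lemma side_step c v w : side c v -> cnbr (@gedge p) v w -> w != shadow v -> side c w.
Proof.
move=> sv /orP [/eqP -> //|vw] /negP w_shadow.
have /orP [//|/andP [wU /eqP idx_w]] := side_edge sv vw.
by case: w_shadow; rewrite -(shadow_U wU) /shadow idx_w.
Qed.

Lemma shadow_cnbr v w : cnbr (@gedge p) (shadow v) (shadow w).
Proof.
rewrite /shadow; move: (odflt i0 _) (odflt i0 _) => i j.
by rewrite /cnbr /=; have [->|ij] := eqVneq i j; rewrite ?eqxx ?ij ?orbT.
Qed.

Lemma shadow_off_side c v w : side c w -> shadow v != w.
Proof. by move=> /side_notU; apply: contraFneq => <-; rewrite /shadow. Qed.

(** Invariant: R stays on the s-side and J on the t-side. *)
Lemma shadowing_wins :
  divider_strategy_wins (@gedge p) (gs p) (gt p) shadow_start shadow_strategy.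
Proof.
move=> r j r0 j0 n legal.
have sides m : m <= n -> side true (r m) && side false (j m).
  elim: m => [|m IH] mn; first by rewrite r0 j0.
  have /andP [rm jm] := IH (ltnW mn).
  have [/andP [rr /forallP Dr] /andP [jj /forallP Dj]] := legal m mn.
  rewrite (side_step rm rr) ?(side_step jm jj) //.
    by move: (Dj (@Ordinal 2 1 isT)); rewrite dpos_shadow // eq_sym.
  by move: (Dr ord0); rewrite dpos_shadow // eq_sym.
split.
  have /andP [rn jn] := sides n (leqnn n).
  by move=> rj; rewrite rj in rn; exact: sides_disjoint rn jn.
move=> m mn; have /andP [rm jm] := sides m.+1 mn.
apply/forallP => a; rewrite !dpos_shadow //.
by rewrite shadow_cnbr !(shadow_off_side _ rm, shadow_off_side _ jm).
Qed.

End Shadowing.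

Lemma two_agents_win : 0 < p -> divider_wins (@gedge p) (gs p) (gt p) 2.
Proof.
move=> p_gt0; pose i0 := Ordinal p_gt0.
exists (shadow_start i0); split; first by move=> a; rewrite ffunE.
by exists (shadow_strategy i0); exact: shadowing_wins.
Qed.

(** ** One Divider agent loses *)

Lemma adj_sx i : cnbr (@gedge p) (gs p) (vx i). Proof. by []. Qed.
Lemma adj_xs i : cnbr (@gedge p) (vx i) (gs p). Proof. by []. Qed.
Lemma adj_ty i : cnbr (@gedge p) (gt p) (vy i). Proof. by []. Qed.
Lemma adj_yt i : cnbr (@gedge p) (vy i) (gt p). Proof. by []. Qed.
Lemma adj_xu i : cnbr (@gedge p) (vx i) (vu i). Proof. by rewrite /cnbr /= eqxx. Qed.
Lemma adj_yu i : cnbr (@gedge p) (vy i) (vu i). Proof. by rewrite /cnbr /= eqxx. Qed.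
Lemma adj_uu a b : a != b -> cnbr (@gedge p) (vu a) (vu b).
Proof. by move=> ab; rewrite /cnbr /= ab orbT. Qed.
Lemma neq_uu a b : a != b -> vu a != vu b.
Proof. by move=> ab; apply: contra ab => /eqP [->]. Qed.
Lemma nadj_ux a b : a != b -> ~~ cnbr (@gedge p) (vu a) (vx b).
Proof. by move=> ab; rewrite /cnbr /= (negbTE ab). Qed.
Lemma nadj_uy a b : a != b -> ~~ cnbr (@gedge p) (vu a) (vy b).
Proof. by move=> ab; rewrite /cnbr /= (negbTE ab). Qed.

(** Facilitator sends R to [x_a] and J to [y_b]; Divider can guard only one of
   [u_a], [u_b], and each case ends with [fwin_two_routes]. *)
Lemma fwin_start a b (d : {ffun 'I_1 -> gV p}) :
  a != b -> d ord0 != vx a -> d ord0 != vy b -> fwin (@gedge p) (gs p) (gt p) d.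
Proof.
move=> ab dx dy; have ba : b != a by rewrite eq_sym.
apply: (@fwin_move _ _ _ _ _ _ (vx a) (vy b)).
- by rewrite F_legal1 adj_sx.
- by rewrite F_legal1 adj_ty.
move=> d1 /D_legal1 [_ d1x d1y].
have [d1u|d1u] := eqVneq (d1 ord0) (vu a).
  apply: (@fwin_move _ _ _ _ _ _ (vx a) (vu b)).
  - by rewrite F_legal1 cnbr_refl d1x.
  - by rewrite F_legal1 adj_yu d1u neq_uu.
  move=> d2 /D_legal1 [_ d2x d2u]; apply: fwin_sym.
  exact: (fwin_two_routes (adj_uu ba) (adj_xu a) (adj_xs a) (adj_sx b) (adj_xu b)
                          isT (nadj_ux ab) d2u).
apply: (@fwin_move _ _ _ _ _ _ (vu a) (vy b)).
- by rewrite F_legal1 adj_xu d1u.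
- by rewrite F_legal1 cnbr_refl d1y.
move=> d2 /D_legal1 [_ d2u d2y].
exact: (fwin_two_routes (adj_uu ab) (adj_yu b) (adj_yt b) (adj_ty a) (adj_yu a)
                        isT (nadj_uy ba) d2u).
Qed.

(** Hence [d_G(s,t) >= 2]: whatever the initial position of the single agent,
   two distinct indices [a], [b] with [x_a], [y_b] unguarded exist. *)
Lemma one_agent_loses : 1 < p -> ~ divider_wins (@gedge p) (gs p) (gt p) 1.
Proof.
move=> p_gt1 [d0 [_ [sigma wins]]]; apply: (fwin_defeats wins).
pose i0 : 'I_p := Ordinal (ltnW p_gt1); pose i1 : 'I_p := Ordinal p_gt1.
have [d0x|d0x] := eqVneq (d0 ord0) (vx i0); first by apply: (@fwin_start i1 i0); rewrite ?d0x.
have [d0y|d0y] := eqVneq (d0 ord0) (vy i1); first by apply: (@fwin_start i1 i0); rewrite ?d0y.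
exact: (@fwin_start i0 i1).
Qed.

End TheGraph.

Theorem mainTheorem6 (p : nat) (hp : 2 <= p) :
  lambdaG (@gedge p) (gs p) (gt p) = Some p /\
  dG (@gedge p) (gs p) (gt p) = Some 2.
Proof.
split; first exact: lambda_Gp.
apply: dG_eq => //; first exact: two_agents_win (ltnW hp).
by case=> [|[|m]] //= _; exact: one_agent_loses.
Qed.
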